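(* Let $S=P_1,P_2,\dots$ be a module sequence for a disjunctive program $P$. If $S$ is inconsistent, then every module sequence for $P$ is inconsistent.
   Context: A disjunctive program is a set of rules $A_1\vee\dots\vee A_m\leftarrow L_1,\dots,L_n$ ($m>0$, $n\ge0$), $A_j$ atoms, $L_i$ atoms or negated atoms $\mathtt{not}\,A$, possibly with function symbols. $\mathsf{Ground}(P)$ is its ground instantiation. For a set $M$ of ground atoms, $P^M$ is obtained from $\mathsf{Ground}(P)$ by deleting rules having some $\mathtt{not}\,B$ in the body with $B\in M$ and deleting negative literals from the remaining rules; $M$ is a stable model iff it is a minimal Herbrand model of $P^M$. A program is consistent iff it has a stable model. The dependency graph has ground atoms as vertices and an edge $A\to B$ whenever some $r\in\mathsf{Ground}(P)$ has $A$ in its head and $B$ occurring in $r$ (body or head); $A$ depends on $B$ if there is a directed path from $A$ to $B$ (every atom depends on itself). With $GH$ the set of ground head atoms of $\mathsf{Ground}(P)$ and an enumeration $p_1,p_2,\dots$ of $GH$, the induced module sequence is $P_1=\{r\in\mathsf{Ground}(P)\mid p_1$ depends on some atom of $head(r)\}$, $P_{i+1}=P_i\cup\{r\in\mathsf{Ground}(P)\mid p_{i+1}$ depends on some atom of $head(r)\}$; a module sequence for $P$ is one induced by some enumeration of $GH$. It is inconsistent if some $P_i$ is inconsistent. *)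

From Stdlib Require Import List Relations.
Import ListNotations.
Set Implicit Arguments.

Section Programs.

(* F : function symbols (constants are 0-ary function symbols);
   Pr : predicate symbols. Variables are natural numbers. *)
Variables F Pr : Type.

Inductive term : Type :=
| Var : nat -> term
| Fn : F -> list term -> term.

Fixpoint tvars (t : term) : list nat :=
  match t with
  | Var x => [x]
  | Fn _ ts => flat_map tvars ts
  end.

Fixpoint tsubst (s : nat -> term) (t : term) : term :=
  match t with
  | Var x => s x
  | Fn f ts => Fn f (map (tsubst s) ts)
  end.

Definition ground_term (t : term) : Prop := tvars t = [].

Record atom : Type := Atom { pred_of : Pr; args_of : list term }.

Definition ground_atom (a : atom) : Prop := Forall ground_term (args_of a).

Definition asubst (s : nat -> term) (a : atom) : atom :=
  Atom (pred_of a) (map (tsubst s) (args_of a)).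

Inductive literal : Type :=
| Pos : atom -> literal
| Neg : atom -> literal.

Definition lit_atom (l : literal) : atom :=
  match l with Pos a => a | Neg a => a end.

Definition lsubst (s : nat -> term) (l : literal) : literal :=
  match l with Pos a => Pos (asubst s a) | Neg a => Neg (asubst s a) end.

(* A rule  A_1 \/ ... \/ A_m <- L_1, ..., L_n  with m > 0. *)
Record rule : Type := Rule { head : list atom; body : list literal }.

Definition well_formed_rule (r : rule) : Prop := head r <> [].

Definition rsubst (s : nat -> term) (r : rule) : rule :=
  Rule (map (asubst s) (head r)) (map (lsubst s) (body r)).

Definition program := rule -> Prop.

Definition disjunctive_program (P : program) : Prop :=
  forall r, P r -> well_formed_rule r.

Definition ground_subst (s : nat -> term) : Prop :=
  forall x, ground_term (s x).

Definition Ground (P : program) : program :=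
  fun g => exists r s, P r /\ ground_subst s /\ g = rsubst s r.

Definition occurs_in (b : atom) (r : rule) : Prop :=
  In b (head r) \/ exists l, In l (body r) /\ lit_atom l = b.

Definition interp := atom -> Prop.

(* M satisfies the positive part of a ground rule r
   (negative literals are ignored: this is used on the reduct). *)
Definition sat_pos (M : interp) (r : rule) : Prop :=
  (forall a, In (Pos a) (body r) -> M a) -> exists h, In h (head r) /\ M h.

(* The reduct G^M: rules of G with no  not B  in the body with B in M,
   with negative literals deleted. We keep the rule and only look at its
   positive body when checking models (sat_pos). *)
Definition reduct (G : program) (M : interp) : program :=
  fun r => G r /\ (forall b, In (Neg b) (body r) -> ~ M b).

Definition herbrand_interp (M : interp) : Prop := forall a, M a -> ground_atom a.

Definition is_model (Q : program) (M : interp) : Prop :=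
  herbrand_interp M /\ forall r, Q r -> sat_pos M r.

Definition minimal_model (Q : program) (M : interp) : Prop :=
  is_model Q M /\
  forall N : interp, is_model Q N -> (forall a, N a -> M a) ->
    forall a, M a -> N a.

Definition stable_model (G : program) (M : interp) : Prop :=
  minimal_model (reduct G M) M.

Definition consistent (G : program) : Prop := exists M, stable_model G M.

Definition dep_edge (P : program) (a b : atom) : Prop :=
  exists r, Ground P r /\ In a (head r) /\ occurs_in b r.

Definition depends (P : program) : relation atom :=
  clos_refl_trans atom (dep_edge P).

Definition GH (P : program) (a : atom) : Prop :=
  exists r, Ground P r /\ In a (head r).

(* An enumeration p_1, p_2, ... of GH (indexed from 0 here):
   every p_i is in GH and every element of GH occurs. *)
Definition enumeration (P : program) (p : nat -> atom) : Prop :=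
  (forall i, GH P (p i)) /\ (forall a, GH P a -> exists i, p i = a).

(* The induced module sequence: module P p i = P_{i+1}. *)
Definition module (P : program) (p : nat -> atom) (i : nat) : program :=
  fun r => Ground P r /\
    exists k, k <= i /\ exists a, In a (head r) /\ depends P (p k) a.

Definition inconsistent_seq (S : nat -> program) : Prop :=
  exists i, ~ consistent (S i).

End Programs.

(* The modules of a sequence are splitting bottoms of Ground(P): a rule whose
   head feeds an atom of a module rule is itself in the module, because the
   dependency relation is transitive.  A stable model of a program restricts to
   a stable model of any such bottom (Lifschitz-Turner splitting), so a
   consistent module makes every module below it consistent.  Given two
   enumerations, each finite prefix of one is covered by a finite prefix of the
   other, so the i-th module of the first sequence is a bottom of some module
   of the second; consistency of the second sequence would thus propagate to
   the first. *)
From Pilot Require Import Defs.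
From Stdlib Require Import List Relations Classical Lia Arith.
Import ListNotations.
Set Implicit Arguments.
Unset Strict Implicit.

Section Splitting.
Variables F Pr : Type.

Definition head_atoms (G : program F Pr) : interp F Pr :=
  fun b => exists r, G r /\ In b (Defs.head r).

Definition bottom_of (U W : program F Pr) : Prop :=
  (forall r, U r -> W r) /\
  (forall r r' b, U r -> occurs_in b r -> W r' -> In b (Defs.head r') -> U r').

Lemma stable_model_supported (G : program F Pr) (M : interp F Pr) :
  stable_model G M -> forall a, M a -> head_atoms G a.
Proof.
  intros [[Hherb Hmod] Hmin] a Ha.
  apply NNPP; intro Hunsupp.
  set (N := fun x => M x /\ x <> a).
  assert (HN : is_model (reduct G M) N).
  { split.
    - intros x [Hx _]; auto.
    - intros r Hr Hbody.
      destruct (Hmod r Hr) as [h [Hin HMh]].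
      { intros b Hb; apply Hbody; auto. }
      exists h; repeat split; auto.
      intros ->; apply Hunsupp; exists r; split; [apply Hr | exact Hin]. }
  destruct (Hmin N HN (fun x H => proj1 H) a Ha); auto.
Qed.

Section Restriction.
Variables U W : program F Pr.
Hypothesis HUW : bottom_of U W.
Variable M : interp F Pr.
Hypothesis HM : stable_model W M.

Let A := head_atoms U.
Let MA : interp F Pr := fun x => M x /\ A x.

Lemma stable_atom_of_bottom_rule r b : U r -> occurs_in b r -> M b -> A b.
Proof.
  intros Hr Hocc Hb.
  destruct (stable_model_supported HM Hb) as [r' [Hr' Hin]].
  exists r'; split; auto.
  eapply (proj2 HUW); eauto.
Qed.

Lemma restriction_is_model : is_model (reduct U MA) MA.
Proof.
  destruct HM as [[Hherb Hmod] _].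
  split.
  - intros x [Hx _]; auto.
  - intros r [HUr Hneg] Hbody.
    destruct (Hmod r) as [h [Hin HMh]].
    + split; [apply (proj1 HUW); auto|].
      intros b Hb HMb; apply (Hneg b Hb); split; auto.
      eapply stable_atom_of_bottom_rule; eauto. right; exists (Neg b); auto.
    + intros a Ha; apply Hbody; auto.
    + exists h; repeat split; auto. exists r; auto.
Qed.

(* A smaller model [N] of the bottom's reduct, completed by the atoms of [M]
   outside the bottom, is a model of the reduct of [W]. *)
Lemma restriction_minimal (N : interp F Pr) :
  is_model (reduct U MA) N -> (forall a, N a -> MA a) -> forall a, MA a -> N a.
Proof.
  intros [HNherb HNmod] HNsub.
  destruct HM as [[Hherb Hmod] Hmin].
  set (N' := fun x => N x \/ (M x /\ ~ A x)).
  assert (HN' : is_model (reduct W M) N').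
  { split.
    - intros x [Hx | [Hx _]]; auto.
    - intros r [HWr Hneg] Hbody.
      destruct (classic (U r)) as [HUr | HnUr].
      + destruct (HNmod r) as [h [Hin HNh]].
        * split; auto. intros b Hb [HMb _]; exact (Hneg b Hb HMb).
        * intros a Ha. destruct (Hbody a Ha) as [Hn | [HMa HnA]]; auto.
          exfalso; apply HnA.
          eapply stable_atom_of_bottom_rule; eauto. right; exists (Pos a); auto.
        * exists h; split; [exact Hin | left; exact HNh].
      + destruct (Hmod r) as [h [Hin HMh]].
        * split; auto.
        * intros a Ha. destruct (Hbody a Ha) as [Hn | [HMa _]]; auto.
          apply HNsub; auto.
        * exists h; split; [exact Hin|]. right; split; auto.
          intros [r' [HUr' Hin']]. apply HnUr.
          eapply (proj2 HUW); eauto. left; exact Hin'. }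
  assert (HN'M : forall x, N' x -> M x).
  { intros x [Hx | [Hx _]]; auto. apply HNsub; auto. }
  intros a [HMa HAa].
  destruct (Hmin N' HN' HN'M a HMa) as [Hn | [_ HnA]]; [exact Hn | contradiction].
Qed.

Lemma restriction_stable : stable_model U MA.
Proof.
  split; [exact restriction_is_model | exact restriction_minimal].
Qed.

End Restriction.

Lemma bottom_consistent (U W : program F Pr) :
  bottom_of U W -> consistent W -> consistent U.
Proof.
  intros HUW [M HM]. eexists; exact (restriction_stable HUW HM).
Qed.

Lemma bottom_of_subprogram (U W G : program F Pr) :
  bottom_of U G -> (forall r, U r -> W r) -> (forall r, W r -> G r) ->
  bottom_of U W.
Proof.
  intros [_ Hcl] HUW HWG. split; auto.
  intros r r' b Hr Hocc Hr'; eauto.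
Qed.

End Splitting.

Section Modules.
Variables F Pr : Type.
Variable P : program F Pr.

Lemma module_bottom (p : nat -> atom F Pr) (i : nat) :
  bottom_of (module P p i) (Ground P).
Proof.
  split.
  - intros r [HG _]; exact HG.
  - intros r r' b [HG [k [Hk [a [Ha Hdep]]]]] Hocc HG' Hb.
    split; auto. exists k; split; auto. exists b; split; auto.
    apply rt_trans with a; [exact Hdep|]. apply rt_step. exists r; auto.
Qed.

Lemma module_sub (p q : nat -> atom F Pr) (i j : nat) :
  (forall k, k <= i -> exists m, m <= j /\ q m = p k) ->
  forall r, module P p i r -> module P q j r.
Proof.
  intros Hcov r [HG [k [Hk [a [Ha Hdep]]]]].
  destruct (Hcov k Hk) as [m [Hm Hqm]].
  split; auto. exists m; split; auto. exists a; split; auto.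
  rewrite Hqm; exact Hdep.
Qed.

End Modules.

Lemma prefix_covered (A : Type) (f q : nat -> A) :
  (forall k, exists m, q m = f k) ->
  forall i, exists j, forall k, k <= i -> exists m, m <= j /\ q m = f k.
Proof.
  intros Hsurj i. induction i as [|i [j Hj]].
  - destruct (Hsurj 0) as [m Hm]. exists m.
    intros k Hk. replace k with 0 by lia. exists m; auto.
  - destruct (Hsurj (S i)) as [m Hm]. exists (max j m).
    intros k Hk. destruct (Nat.eq_dec k (S i)) as [-> | Hne].
    + exists m; split; [lia | exact Hm].
    + destruct (Hj k) as [m' [Hm' Heq]]; [lia|].
      exists m'; split; [lia | exact Heq].
Qed.

Theorem theorem3p9 (F Pr : Type) (P : program F Pr)
  (HP : disjunctive_program P) (p : nat -> atom F Pr)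
  (Hp : enumeration P p) :
  inconsistent_seq (module P p) ->
  forall q : nat -> atom F Pr, enumeration P q ->
    inconsistent_seq (module P q).
Proof.
  intros [i Hi] q [_ Hq].
  assert (Hcov : forall k, exists m, q m = p k).
  { intro k; apply Hq, (proj1 Hp). }
  destruct (prefix_covered Hcov i) as [j Hj].
  exists j; intro Hcons; apply Hi.
  apply bottom_consistent with (module P q j); [|exact Hcons].
  apply bottom_of_subprogram with (Ground P).
  - apply module_bottom.
  - exact (module_sub Hj).
  - intros r [HG _]; exact HG.
Qed.
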